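(* Let $m,n,k$ be positive integers, let $X_1,\ldots,X_k$ be pairwise disjoint $2$-element subsets of $[m]$, and let $Y_1,\ldots,Y_k$ be arbitrary $2$-element subsets of $[n]$. Then the number $S_{22}(m,n,k)$ of functions $f:[m]\to[n]$ such that $f(X_i)\neq Y_i$ for $i=1,2,\ldots,k$ equals $$S_{22}(m,n,k)=\sum_{i=0}^k(-2)^i\binom{k}{i}n^{m-2i}=n^{m-2k}(n^2-2)^k.$$
   Context: $[n]=\{1,\ldots,n\}$. *)

From mathcomp Require Import all_boot all_order all_algebra.
Set Implicit Arguments. Unset Strict Implicit. Unset Printing Implicit Defensive.
Import Order.TTheory GRing.Theory Num.Theory.

(* [m] is modelled by 'I_m (0-based indexing), functions [m] -> [n] by
   finite functions {ffun 'I_m -> 'I_n}; f(X) is the image set f @: X. *)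
Definition S22 (m n k : nat) (X : 'I_k -> {set 'I_m}) (Y : 'I_k -> {set 'I_n}) : nat :=
  #|[set f : {ffun 'I_m -> 'I_n} | [forall i : 'I_k, f @: X i != Y i]]|.

From mathcomp Require Import all_boot all_order all_algebra.
From mathcomp Require Import ring.
Import GRing.Theory.
Set Implicit Arguments. Unset Strict Implicit. Unset Printing Implicit Defensive.

(* Impose the conditions f(X_i) <> Y_i one at a time.  Since the X_i are
   disjoint, the first j conditions do not look at f on X_j = {a, b}, so every
   value of (f a, f b) occurs equally often among the functions satisfying
   them; exactly n^2 - 2 of these n^2 values avoid f(X_j) = Y_j = {c, d}, the
   excluded ones being (c, d) and (d, c).  Each condition thus multiplies the
   count by (n^2 - 2) / n^2, which gives n^(m-2k) (n^2 - 2)^k as 2k <= m; the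
   alternating sum is its binomial expansion. *)

Section PairFibers.
Variables (aT rT : finType) (a b : aT).
Hypothesis neq_ab : a != b.
Local Notation fT := {ffun aT -> rT}.

Definition upd2 (f : fT) (u v : rT) : fT :=
  [ffun x => if x == a then u else if x == b then v else f x].

Lemma upd2_off (f : fT) u v : {in ~: [set a; b], upd2 f u v =1 f}.
Proof.
move=> x; rewrite !inE negb_or => /andP[/negbTE xa /negbTE xb].
by rewrite ffunE xa xb.
Qed.

Variable Q : pred fT.
Hypothesis Q_off : forall f g : fT, {in ~: [set a; b], f =1 g} -> Q f = Q g.

Definition pair_fiber (p : rT * rT) := [set f | Q f & (f a, f b) == p].

Lemma card_pair_fiber_le p q : #|pair_fiber p| <= #|pair_fiber q|.
Proof.
rewrite /pair_fiber; case: q => u v.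
have ba : (b == a) = false by rewrite eq_sym (negbTE neq_ab).
rewrite -(@card_in_imset _ _ (fun f => upd2 f u v)) => [|f g]; last first.
  rewrite !inE => /andP[_ /eqP <-] /andP[_ /eqP [ga gb]] /ffunP eq_upd.
  apply/ffunP => x; have := eq_upd x; rewrite !ffunE.
  by case: eqP => [-> _|_]; [rewrite ga | case: eqP => [->|//]; rewrite gb].
apply/subset_leq_card/subsetP => _ /imsetP[f + ->]; rewrite !inE.
rewrite (Q_off (upd2_off f _ _)) !ffunE eqxx ba !eqxx andbT.
by case/andP.
Qed.

Lemma card_pair_fiber p q : #|pair_fiber p| = #|pair_fiber q|.
Proof. by apply/eqP; rewrite eqn_leq !card_pair_fiber_le. Qed.

Lemma card_pair_pred (P : pred (rT * rT)) p0 :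
  #|[set f | Q f & P (f a, f b)]| = #|P| * #|pair_fiber p0|.
Proof.
rewrite -sum1_card (partition_big (fun f : fT => (f a, f b)) P) => [|f]; last first.
  by rewrite inE => /andP[].
rewrite -sum_nat_const; apply: eq_bigr => p Pp.
rewrite (card_pair_fiber p0 p) -sum1_card; apply: eq_bigl => f.
by rewrite !inE -andbA; case: eqP => [->|_]; rewrite ?Pp ?andbF.
Qed.

End PairFibers.

Lemma eq_set2 (T : finType) (x y c d : T) : c != d ->
  ([set x; y] == [set c; d]) = ((x, y) \in [set (c, d); (d, c)]).
Proof.
move=> cd; rewrite !inE !xpair_eqE; apply/eqP/idP => [eq_xy|].
  have mem : [set x; y] =i [set c; d] by rewrite eq_xy.
  have := mem c; have := mem d; have := mem x; have := mem y.
  rewrite !inE !eqxx /= ?orbT => /esym/orP[]/eqP-> /esym/orP[]/eqP->;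
    by rewrite ?eqxx ?orbT // ?orbb ?[d == c]eq_sym (negbTE cd).
by case/orP=> /andP[/eqP-> /eqP->] //; apply: setUC.
Qed.

Lemma card_pairs_neq_set2 (T : finType) (c d : T) : c != d ->
  #|[pred p : T * T | [set p.1; p.2] != [set c; d]]| + 2 = #|T| ^ 2.
Proof.
move=> cd; have two : #|[set (c, d); (d, c)]| = 2 by rewrite cards2 xpair_eqE (negbTE cd).
have <- : #|{: T * T}| = #|T| ^ 2 by rewrite card_prod mulnn.
rewrite -two -(cardC [set (c, d); (d, c)]) addnC; congr (_ + _).
by apply: eq_card => -[x y]; rewrite !inE /= eq_set2 // !inE.
Qed.

Lemma leq_card_disjoint_pairs (I T : finType) (X : I -> {set T}) :
  (forall i, #|X i| = 2) -> (forall i j, i != j -> [disjoint X i & X j]) ->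
  2 * #|I| <= #|T|.
Proof.
move=> card_X disj_X; have inj_X : injective X.
  move=> i j eq_X; apply/eqP/negPn/negP => /disj_X.
  by rewrite eq_X -setI_eq0 setIid -cards_eq0 card_X.
pose P := X @: setT.
have tiP : trivIset P.
  apply/trivIsetP => _ _ /imsetP[i _ ->] /imsetP[j _ ->] ne_X.
  by apply: disj_X; apply: contraNneq ne_X => ->.
have : \sum_(A in P) #|A| <= #|T|.
  have /eqP <- : #|cover P| == \sum_(A in P) #|A| by rewrite (leq_card_cover P).2.
  exact: max_card.
rewrite big_imset /=; last by move=> i j _ _; apply: inj_X.
by rewrite (eq_bigr _ (fun i _ => card_X i)) sum_nat_const cardsT mulnC.
Qed.

Local Open Scope ring_scope.

Lemma PoszX (n e : nat) : (n ^ e)%N%:Z = n%:Z ^+ e.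
Proof. by rewrite -!natz natrX. Qed.

Section AvoidingPairs.
Variables (m n k : nat) (X : 'I_k -> {set 'I_m}) (Y : 'I_k -> {set 'I_n}).
Hypothesis card_X : forall i, #|X i| = 2%N.
Hypothesis disj_X : forall i j, i != j -> [disjoint X i & X j].
Hypothesis card_Y : forall i, #|Y i| = 2%N.

Definition avoids_before (j : nat) (f : {ffun 'I_m -> 'I_n}) :=
  [forall (i : 'I_k | (i < j)%N), f @: X i != Y i].

Lemma avoids_before0 f : avoids_before 0 f.
Proof. by apply/forall_inP. Qed.

Lemma avoids_beforeS (j : 'I_k) f :
  avoids_before j.+1 f = avoids_before j f && (f @: X j != Y j).
Proof.
apply/forall_inP/andP => [avoid | [/forall_inP avoid avoid_j] i].
  by split; [apply/forall_inP => i lt_ij; apply: avoid; rewrite ltnS ltnW |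
             apply: avoid].
rewrite ltnS leq_eqVlt => /orP[/eqP/val_inj-> //|]; exact: avoid.
Qed.

Lemma avoids_before_off (j : 'I_k) (f g : {ffun 'I_m -> 'I_n}) :
  {in ~: X j, f =1 g} -> avoids_before j f = avoids_before j g.
Proof.
move=> eq_fg; apply: eq_forallb => i; case: ltnP => //= lt_ij.
congr (~~ (_ == _)); apply: eq_in_imset => x Xi_x; apply: eq_fg.
have ne_ij : i != j by rewrite -(inj_eq val_inj) /= neq_ltn lt_ij.
by rewrite inE (disjointFr (disj_X ne_ij) Xi_x).
Qed.

Lemma card_avoids_beforeS (j : 'I_k) :
  #|[set f | avoids_before j.+1 f]|%:Z * n%:Z ^+ 2 =
  #|[set f | avoids_before j f]|%:Z * (n%:Z ^+ 2 - 2).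
Proof.
have [a [b [ab eXj]]] := cards2P _ (introT eqP (card_X j)).
have [c [d [cd eYj]]] := cards2P _ (introT eqP (card_Y j)).
have Q_off := @avoids_before_off j; rewrite eXj in Q_off.
pose P := [pred p : 'I_n * 'I_n | [set p.1; p.2] != [set c; d]].
have -> : [set f | avoids_before j.+1 f] = [set f | avoids_before j f & P (f a, f b)].
  by apply/setP => f; rewrite !inE avoids_beforeS eXj eYj imsetU1 imset_set1.
have -> : [set f | avoids_before j f] = [set f | avoids_before j f & predT (f a, f b)].
  by apply/setP => f; rewrite !inE andbT.
rewrite !(card_pair_pred ab Q_off _ (c, c)) !PoszM.
have -> : #|predT : pred ('I_n * 'I_n)|%:Z = n%:Z ^+ 2.
  by rewrite -[#|predT|]/#|{: 'I_n * 'I_n}| card_prod card_ord mulnn PoszX.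
have -> : #|P|%:Z = n%:Z ^+ 2 - 2.
  by rewrite -PoszX -[n in (n ^ 2)%N]card_ord -(card_pairs_neq_set2 cd) PoszD addrK.
ring.
Qed.

Lemma card_avoids_before (j : nat) : (j <= k)%N ->
  #|[set f | avoids_before j f]|%:Z * n%:Z ^+ (2 * j) =
  n%:Z ^+ m * (n%:Z ^+ 2 - 2) ^+ j.
Proof.
elim: j => [_|j IHj lt_jk].
  have -> : [set f | avoids_before 0 f] = setT.
    by apply/setP => f; rewrite !inE avoids_before0.
  by rewrite cardsT card_ffun !card_ord muln0 !expr0 !mulr1 PoszX.
rewrite mulnS exprD mulrA (card_avoids_beforeS (Ordinal lt_jk)) /=.
by rewrite mulrAC IHj ?(ltnW lt_jk) // [in RHS]exprSr mulrA.
Qed.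

End AvoidingPairs.

Theorem corollary5 (m n k : nat) (X : 'I_k -> {set 'I_m}) (Y : 'I_k -> {set 'I_n}) :
  (0 < m)%N -> (0 < n)%N -> (0 < k)%N ->
  (forall i, #|X i| = 2%N) ->
  (forall i j, i != j -> [disjoint X i & X j]) ->
  (forall i, #|Y i| = 2%N) ->
  (S22 X Y)%:Z = \sum_(i < k.+1) (-2) ^+ i * ('C(k, i))%:Z * (n%:Z) ^+ (m - 2 * i)
  /\ (S22 X Y)%:Z = (n%:Z) ^+ (m - 2 * k) * ((n%:Z) ^+ 2 - 2) ^+ k.
Proof.
move=> _ n_gt0 _ card_X disj_X card_Y.
have le_2k_m := leq_card_disjoint_pairs card_X disj_X; rewrite !card_ord in le_2k_m.
have S22E : S22 X Y = #|[set f | avoids_before X Y k f]|.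
  by apply: eq_card => f; rewrite !inE; apply: eq_forallb => i; rewrite ltn_ord.
have closed_form : (S22 X Y)%:Z = n%:Z ^+ (m - 2 * k) * (n%:Z ^+ 2 - 2) ^+ k.
  apply: (mulIf (expf_neq0 (2 * k) (_ : n%:Z != 0))); first by rewrite -lt0n.
  rewrite S22E card_avoids_before // mulrAC -exprD subnK //.
split=> //; rewrite closed_form exprDn big_distrr /=; apply: eq_bigr => -[i] /= + _.
rewrite ltnS => le_ik; rewrite -mulr_natr -exprM natz.
have -> : (m - 2 * i = (m - 2 * k) + 2 * (k - i))%N.
  by rewrite mulnBr addnBA ?leq_mul2l // subnK ?leq_sub2l.
by rewrite exprD; ring.
Qed.
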